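(* Let $X$ be a definable set in $(Z,R)^{eq}$ which is both $Z$-internal and $R$-internal. Then $X$ is finite.
   Context: Let $\mathfrak C$ be a monster model, $Z,R$ definable subsets of $\mathfrak C$ which are stably embedded (subsets of $Z^n$, resp. $R^n$, definable with parameters from $\mathfrak C$ are definable with parameters from $Z$, resp. $R$) and fully orthogonal (for all $m,n$, every definable subset of $Z^m\times R^n$ is a finite union of sets $U\times V$ with $U\subseteq Z^m$, $V\subseteq R^n$ definable). $(Z,R)^{eq}$ is the two-sorted structure $(Z,R)$ (no connection between the sorts) expanded by all imaginary sorts; ''definable'' means definable in $(Z,R)^{eq}$ with parameters. A definable set $X$ is $Z$-internal (resp. $R$-internal) if there is a definable surjection from $Z^k$ (resp. $R^k$) onto $X$ for some $k$. *)

From mathcomp Require Import all_boot.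
From mathcomp Require Import boolp classical_sets cardinality.

Set Implicit Arguments.
Unset Strict Implicit.
Unset Printing Implicit Defensive.

Local Open Scope classical_set_scope.

(* Points of the home sort  Z^m x R^n  of the two-sorted structure (Z,R). *)
Definition pt (Z R : Type) (m n : nat) := (('I_m -> Z) * ('I_n -> R))%type.

Definition reindex (Z R : Type) (m n m' n' : nat)
  (s : 'I_m' -> 'I_m) (t : 'I_n' -> 'I_n) (p : pt Z R m n) : pt Z R m' n' :=
  (p.1 \o s, p.2 \o t).

Definition lpart (Z R : Type) (m n m' n' : nat) (r : pt Z R (m + m') (n + n'))
  : pt Z R m n := (r.1 \o lshift m', r.2 \o lshift n').
Definition rpart (Z R : Type) (m n m' n' : nat) (r : pt Z R (m + m') (n + n'))
  : pt Z R m' n' := (r.1 \o @rshift m m', r.2 \o @rshift n n').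

(* D is the family of all subsets of Z^m x R^n definable with parameters in a
   two-sorted structure (Z,R).  The axioms below are exactly the closure
   properties of such a family: boolean combinations, substitution of
   variables (preimages under coordinate maps), existential quantification
   (images under coordinate maps), equality on each sort, and parameters
   (singletons).  Conversely any such family is the family of
   parameter-definable sets of the structure having all its members as
   basic relations. *)
Record def_family (Z R : Type) (D : forall m n : nat, set (set (pt Z R m n)))
  : Prop := {
  def_setT : forall m n, D m n setT;
  def_setC : forall m n (A : set (pt Z R m n)), D m n A -> D m n (~` A);
  def_setI : forall m n (A B : set (pt Z R m n)),
      D m n A -> D m n B -> D m n (A `&` B);
  def_preim : forall m n m' n' (s : 'I_m -> 'I_m') (t : 'I_n -> 'I_n')
      (A : set (pt Z R m n)), D m n A -> D m' n' (reindex s t @^-1` A);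
  def_image : forall m n m' n' (s : 'I_m' -> 'I_m) (t : 'I_n' -> 'I_n)
      (A : set (pt Z R m n)), D m n A -> D m' n' (reindex s t @` A);
  def_eqZ : D 2 0 [set p | p.1 ord0 = p.1 ord_max];
  def_eqR : D 0 2 [set p | p.2 ord0 = p.2 ord_max];
  def_point : forall m n (p : pt Z R m n), D m n [set p] }.

Definition defZ (Z R : Type) (D : forall m n : nat, set (set (pt Z R m n)))
  (m : nat) (U : set ('I_m -> Z)) : Prop := D m 0 [set p | U p.1].
Definition defR (Z R : Type) (D : forall m n : nat, set (set (pt Z R m n)))
  (n : nat) (V : set ('I_n -> R)) : Prop := D 0 n [set p | V p.2].
Definition def_rel (Z R : Type) (D : forall m n : nat, set (set (pt Z R m n)))
  (m n m' n' : nat) (E : pt Z R m n -> pt Z R m' n' -> Prop) : Prop :=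
  D (m + m') (n + n') [set r | E (lpart r) (rpart r)].

Definition fully_orthogonal (Z R : Type)
  (D : forall m n : nat, set (set (pt Z R m n))) : Prop :=
  forall m n (A : set (pt Z R m n)), D m n A ->
    exists (k : nat) (U : 'I_k -> set ('I_m -> Z)) (V : 'I_k -> set ('I_n -> R)),
      (forall i, defZ D (U i) /\ defR D (V i)) /\
      A = [set p | exists i, U i p.1 /\ V i p.2].

Definition equiv_on (T : Type) (Y : set T) (E : T -> T -> Prop) : Prop :=
  [/\ forall p q, E p q -> Y p /\ Y q,
      forall p, Y p -> E p p,
      forall p q, E p q -> E q p &
      forall p q r, E p q -> E q r -> E p r].

(* The definable set  Y/E  of (Z,R)^eq, as the set of its elements (E-classes). *)
Definition quot (T : Type) (Y : set T) (E : T -> T -> Prop) : set (set T) :=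
  [set C | exists2 y, Y y & C = E y].

(* A map f : Z^k -> X is definable iff the
   preimage of its graph in Z^k x Y, {(z,y) | y in f z}, is definable. *)
Definition Z_internal (Z R : Type) (D : forall m n : nat, set (set (pt Z R m n)))
  (m n : nat) (Y : set (pt Z R m n)) (E : pt Z R m n -> pt Z R m n -> Prop)
  : Prop :=
  exists (k : nat) (f : ('I_k -> Z) -> set (pt Z R m n)),
    [/\ forall z, quot Y E (f z),
        def_rel D (fun (a : pt Z R k 0) (q : pt Z R m n) => f a.1 q) &
        forall C, quot Y E C -> exists z, f z = C].

Definition R_internal (Z R : Type) (D : forall m n : nat, set (set (pt Z R m n)))
  (m n : nat) (Y : set (pt Z R m n)) (E : pt Z R m n -> pt Z R m n -> Prop)
  : Prop :=
  exists (k : nat) (g : ('I_k -> R) -> set (pt Z R m n)),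
    [/\ forall r, quot Y E (g r),
        def_rel D (fun (a : pt Z R 0 k) (q : pt Z R m n) => g a.2 q) &
        forall C, quot Y E C -> exists r, g r = C].

From Pilot Require Import Defs.
From mathcomp Require Import all_boot.
From mathcomp Require Import boolp classical_sets cardinality.

(* Let f : Z^k -> X and g : R^l -> X be definable surjections.  The
   coincidence relation {(z, r) | f z = g r} is definable in Z^k x R^l, so by
   full orthogonality it is a finite union of rectangles U_i x V_i.  On one
   rectangle f is constant: if (z, r) and (z', r') lie in U_i x V_i then so
   does (z, r'), hence f z = g r' = f z'.  Every element of X is some f z with
   (z, r) in the coincidence relation, so X has at most as many elements as
   there are rectangles. *)

Set Implicit Arguments.
Unset Strict Implicit.
Unset Printing Implicit Defensive.

Local Open Scope classical_set_scope.

Definition tcat (T : Type) (k m : nat) (a : 'I_k -> T) (b : 'I_m -> T)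
  : 'I_(k + m) -> T :=
  fun i => match split i with inl j => a j | inr j => b j end.

Lemma tcat_lshift (T : Type) (k m : nat) (a : 'I_k -> T) (b : 'I_m -> T) :
  tcat a b \o lshift m = a.
Proof. by apply/funext => j /=; rewrite /tcat (unsplitK (inl j)). Qed.

Lemma tcat_rshift (T : Type) (k m : nat) (a : 'I_k -> T) (b : 'I_m -> T) :
  tcat a b \o @rshift k m = b.
Proof. by apply/funext => j /=; rewrite /tcat (unsplitK (inr j)). Qed.

Section Definability.

Variables (Z R : Type) (D : forall m n : nat, set (set (pt Z R m n))).
Arguments D : clear implicits.
Hypothesis hD : def_family D.

Definition pt_cat (k l m n : nat) (a : pt Z R k l) (q : pt Z R m n)
  : pt Z R (k + m) (l + n) := (tcat a.1 q.1, tcat a.2 q.2).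

Lemma lpart_cat (k l m n : nat) (a : pt Z R k l) (q : pt Z R m n) :
  lpart (pt_cat a q) = a.
Proof. by rewrite /lpart /= !tcat_lshift; case: a. Qed.

Lemma rpart_cat (k l m n : nat) (a : pt Z R k l) (q : pt Z R m n) :
  rpart (pt_cat a q) = q.
Proof. by rewrite /rpart /= !tcat_rshift; case: q. Qed.

Lemma def_rel_Z_cylinder (k l m n : nat) (P : ('I_k -> Z) -> set (pt Z R m n)) :
  def_rel D (fun (a : pt Z R k 0) q => P a.1 q) ->
  D (k + m) (l + n) [set r | P (lpart r).1 (rpart r)].
Proof.
pose t (j : 'I_(0 + n)) : 'I_(l + n) := rshift l (j : 'I_n).
have -> : [set r : pt Z R (k + m) (l + n) | P (lpart r).1 (rpart r)] =
    Defs.reindex idfun t @^-1`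
      [set r : pt Z R (k + m) (0 + n) | P (lpart r).1 (rpart r)].
  apply/funext => r; rewrite /rpart /=; congr (P _ (_, _)).
  by apply/funext => j; congr (r.2 _); apply: val_inj.
exact: (def_preim hD).
Qed.

Lemma def_rel_R_cylinder (k l m n : nat) (Q : ('I_l -> R) -> set (pt Z R m n)) :
  def_rel D (fun (a : pt Z R 0 l) q => Q a.2 q) ->
  D (k + m) (l + n) [set r | Q (lpart r).2 (rpart r)].
Proof.
pose s (j : 'I_(0 + m)) : 'I_(k + m) := rshift k (j : 'I_m).
have -> : [set r : pt Z R (k + m) (l + n) | Q (lpart r).2 (rpart r)] =
    Defs.reindex s idfun @^-1`
      [set r : pt Z R (0 + m) (l + n) | Q (lpart r).2 (rpart r)].
  apply/funext => r; rewrite /rpart /=; congr (Q _ (_, _)).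
  by apply/funext => j; congr (r.1 _); apply: val_inj.
exact: (def_preim hD).
Qed.

Lemma def_meet (k l m n : nat) (P : ('I_k -> Z) -> set (pt Z R m n))
    (Q : ('I_l -> R) -> set (pt Z R m n)) :
  def_rel D (fun (a : pt Z R k 0) q => P a.1 q) ->
  def_rel D (fun (a : pt Z R 0 l) q => Q a.2 q) ->
  D k l [set a | exists q, P a.1 q /\ Q a.2 q].
Proof.
move=> defP defQ.
have -> : [set a : pt Z R k l | exists q, P a.1 q /\ Q a.2 q] =
    Defs.reindex (lshift m) (lshift n) @`
      ([set r | P (lpart r).1 (rpart r)] `&` [set r | Q (lpart r).2 (rpart r)]).
  apply/funext => a; apply/propext; split.
    case=> q PQ; exists (pt_cat a q); last exact: lpart_cat.
    by rewrite /setI /mkset lpart_cat rpart_cat.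
  by case=> r [Pr Qr] <-; exists (rpart r).
apply: (def_image hD); apply: (def_setI hD).
  exact: def_rel_Z_cylinder.
exact: def_rel_R_cylinder.
Qed.

End Definability.

Lemma quot_eqP (T : Type) (Y : set T) (E : T -> T -> Prop) (C C' : set T) :
  equiv_on Y E -> quot Y E C -> quot Y E C' ->
  C = C' <-> exists q, C q /\ C' q.
Proof.
case=> _ Erefl Esym Etrans [y Yy ->] [y' Yy' ->]; split.
  by move=> <-; exists y; split; apply: Erefl.
case=> q [Eyq Ey'q]; apply/funext => x; apply/propext; split => Ex.
  exact: Etrans Ey'q (Etrans _ _ _ (Esym _ _ Eyq) Ex).
exact: Etrans Eyq (Etrans _ _ _ (Esym _ _ Ey'q) Ex).
Qed.

Lemma is_subset1_finite (T : Type) (S : set T) :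
  is_subset1 S -> finite_set S.
Proof.
move=> S1; have [[x Sx]|noS] := pselect (exists x, S x).
  by apply: sub_finite_set (finite_set1 x) => y Sy; apply: S1.
by apply: sub_finite_set (finite_set0 T) => y Sy; apply: noS; exists y.
Qed.

Lemma finite_common_range (A B C : Type) (f : A -> C) (g : B -> C)
    (K : nat) (U : 'I_K -> set A) (V : 'I_K -> set B) :
  [set ab | f ab.1 = g ab.2] = [set ab | exists i, U i ab.1 /\ V i ab.2] ->
  finite_set (range f `&` range g).
Proof.
move=> fgUV; pose fUV i := [set f a | a in [set a | U i a /\ exists b, V i b]].
have fUV_cover : range f `&` range g `<=` \bigcup_(i in setT) fUV i.
  move=> c [[a _ fa] [b _ gb]].
  have : [set ab | f ab.1 = g ab.2] (a, b) by rewrite /= fa gb.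
  rewrite fgUV => -[i [Ua Vb]].
  by exists i => //; exists a => //; split; last exists b.
apply: sub_finite_set fUV_cover _; apply: bigcup_finite => [|i _].
  exact: finite_finset.
apply: is_subset1_finite => _ _ [a [Ua _] <-] [a' [Ua' [b' Vb']] <-].
have fgab' : [set ab | f ab.1 = g ab.2] (a, b') by rewrite fgUV; exists i.
have fga'b' : [set ab | f ab.1 = g ab.2] (a', b') by rewrite fgUV; exists i.
by rewrite /= in fgab' fga'b'; rewrite fgab' fga'b'.
Qed.

Theorem lemma2p4 (Z R : Type) (D : forall m n : nat, set (set (pt Z R m n)))
  (hD : def_family D) (hort : fully_orthogonal D)
  (m n : nat) (Y : set (pt Z R m n)) (E : pt Z R m n -> pt Z R m n -> Prop)
  (hY : D m n Y) (hE : def_rel D E) (hEq : equiv_on Y E)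
  (hZ : Z_internal D Y E) (hR : R_internal D Y E) :
  finite_set (quot Y E).
Proof.
case: hZ => k [f [f_quot f_def f_onto]].
case: hR => l [g [g_quot g_def g_onto]].
have fg_meet : [set a : pt Z R k l | f a.1 = g a.2] =
    [set a | exists q, f a.1 q /\ g a.2 q].
  apply/funext => a; apply/propext.
  exact: quot_eqP hEq (f_quot _) (g_quot _).
have [K [U [V [_ fgUV]]]] := hort _ _ _ (def_meet hD f_def g_def).
rewrite -fg_meet in fgUV.
apply: sub_finite_set (finite_common_range fgUV) => C XC.
have [[z fz] [r gr]] := (f_onto C XC, g_onto C XC).
by split; [exists z | exists r].
Qed.
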